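(* Let $F \leq F' \leq \hat F$ and $H\leq H'\leq \hat H$ be permutation groups on $\Omega$ with $F\leq H$ and $F'\leq H'$. Suppose that $H\cap F'=F$ and $H'=HF'$. Then $G(F,F')$ is a closed cocompact subgroup of $G(H,H')$. If moreover $F$ acts freely on $\Omega$, then $G(F,F')$ is a cocompact lattice in $G(H,H')$.
   Context: Standing notation. $\Omega$ is a finite set with $d=|\Omega|\geq 3$, $\mathcal{T}_d$ is the $d$-regular tree with vertex set $V$ and set $E$ of non-oriented edges, and $\mathrm{Aut}(\mathcal{T}_d)$ carries the permutation topology. Fix a coloring $c:E\to\Omega$ such that for every vertex $v$ its restriction $c_v$ to the set $E(v)$ of edges containing $v$ is a bijection onto $\Omega$. For $g\in\mathrm{Aut}(\mathcal{T}_d)$ and $v\in V$, the local permutation is $\sigma(g,v)=c_{gv}\circ g_v\circ c_v^{-1}\in\mathrm{Sym}(\Omega)$, where $g_v:E(v)\to E(gv)$ is induced by $g$. For $F\leq\mathrm{Sym}(\Omega)$: $U(F)=\{g:\sigma(g,v)\in F \ \forall v\}$; $G(F)=\{g:\sigma(g,v)\in F \text{ for all but finitely many } v\}$; $\hat F$ is the subgroup of permutations preserving each $F$-orbit. For $F\leq F'\leq\hat F$, $G(F,F')=G(F)\cap U(F')$, endowed with the unique group topology for which the inclusion $U(F)\hookrightarrow G(F,F')$ is continuous and open ($U(F)$ with the topology induced from $\mathrm{Aut}(\mathcal{T}_d)$). *)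

From HB Require Import structures.
From Stdlib Require List.
From mathcomp Require Import all_boot all_fingroup.
Set Implicit Arguments. Unset Strict Implicit. Unset Printing Implicit Defensive.

Section Tree.
Variable Omega : finType.

(* Concrete model of the d-regular tree T_d (d = #|Omega|) with its legal
   coloring: the Cayley graph of the free product of d copies of Z/2.
   Vertices are reduced words over Omega (no two consecutive equal letters);
   the neighbour of w along the edge of colour a is a::w, or w' if w = a::w'. *)
Definition reduced (w : seq Omega) : bool := sorted (fun a b => a != b) w.

Definition vertex := {w : seq Omega | reduced w}.

Definition nbw (w : seq Omega) (a : Omega) : seq Omega :=
  if w is b :: w' then (if b == a then w' else a :: w) else [:: a].

Lemma nbw_reduced (w : seq Omega) a : reduced w -> reduced (nbw w a).
Proof.
case: w => [|b w] //= H.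
case: eqP => [_|/eqP Hba].
- by move: H; rewrite /reduced /=; case: w => //= c w /andP [].
- by rewrite /reduced /= eq_sym Hba.
Qed.

Definition nb (v : vertex) (a : Omega) : vertex :=
  exist _ (nbw (proj1_sig v) a) (nbw_reduced a (proj2_sig v)).

Definition adj (u v : vertex) : Prop := exists a, v = nb u a.

Definition is_aut (g : vertex -> vertex) : Prop :=
  bijective g /\ forall u v, adj u v <-> adj (g u) (g v).

(* sigma(g,v) lies in F: the local permutation p with
   c_{gv}(g(edge of colour a at v)) = p a belongs to F *)
Definition loc_in (F : {set {perm Omega}}) (g : vertex -> vertex) (v : vertex) : Prop :=
  exists2 p : {perm Omega}, p \in F & forall a, g (nb v a) = nb (g v) (p a).

Definition U (F : {set {perm Omega}}) (g : vertex -> vertex) : Prop :=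
  is_aut g /\ forall v, loc_in F g v.

Definition G (F : {set {perm Omega}}) (g : vertex -> vertex) : Prop :=
  is_aut g /\ exists s : seq vertex, forall v, ~ loc_in F g v -> v \in s.

Definition GG (F F' : {set {perm Omega}}) (g : vertex -> vertex) : Prop :=
  G F g /\ U F' g.

Definition hat (F : {group {perm Omega}}) : {set {perm Omega}} :=
  [set p : {perm Omega} | [forall x, p x \in orbit 'P F x]].

(* The topology on G(F,F'): the group topology in which U(F) (with the
   permutation topology, i.e. pointwise stabilisers of finite vertex sets as
   basic identity neighbourhoods) is an open subgroup. *)
Definition is_open (F F' : {set {perm Omega}}) (O : (vertex -> vertex) -> Prop) : Prop :=
  forall g, O g -> GG F F' g /\
    exists S : seq vertex, forall h, U F h -> (forall v, v \in S -> h v = v) ->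
      O (g \o h).

Definition is_closed (F F' : {set {perm Omega}}) (Gam : (vertex -> vertex) -> Prop) : Prop :=
  is_open F F' (fun g => GG F F' g /\ ~ Gam g).

(* Gam is cocompact in G(F,F'): the coset space G(F,F')/Gam is compact in the
   quotient topology, i.e. every cover of G(F,F') by open sets saturated under
   right multiplication by Gam has a finite subcover. *)
Definition cocompact (F F' : {set {perm Omega}}) (Gam : (vertex -> vertex) -> Prop) : Prop :=
  forall (I : Type) (O : I -> (vertex -> vertex) -> Prop),
    (forall i, is_open F F' (O i)) ->
    (forall i g h, O i g -> Gam h -> O i (g \o h)) ->
    (forall g, GG F F' g -> exists i, O i g) ->
    exists s : list I, forall g, GG F F' g -> exists i, List.In i s /\ O i g.

Definition discrete (F F' : {set {perm Omega}}) (Gam : (vertex -> vertex) -> Prop) : Prop :=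
  forall g, Gam g -> exists O, is_open F F' O /\ O g /\
    forall h, O h -> Gam h -> h =1 g.

Definition cocompact_lattice (F F' : {set {perm Omega}}) (Gam : (vertex -> vertex) -> Prop) : Prop :=
  discrete F F' Gam /\ cocompact F F' Gam.

Definition acts_freely (F : {set {perm Omega}}) : Prop :=
  forall p, p \in F -> forall x, p x = x -> p = 1%g.

End Tree.

From HB Require Import structures.
From mathcomp Require Import all_boot all_fingroup zify.
From Stdlib Require Import FunctionalExtensionality Classical ClassicalEpsilon.
From Stdlib Require List.
Set Implicit Arguments. Unset Strict Implicit. Unset Printing Implicit Defensive.
Local Open Scope group_scope.

(* Every g in G(H,H') factors as g = k gam with gam in G(F,F') and k in the
   stabiliser of the root in U(H).  The local permutations of gam are chosen
   vertex by vertex in F': each agrees with its parent's one on the connecting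
   edge (possible as F' <= hat F) and differs from sigma(g,v) by an element of H
   (possible as H' = H F').  As H :&: F' = F, sigma(gam,v) leaves F only where
   sigma(g,v) leaves H, so gam lies in G(F,F').  The root stabiliser of U(H) is
   compact (a Koenig argument on the finitely many restrictions to balls),
   whence cocompactness.  An element outside G(F,F') is gam k with k in U(H)
   having a local permutation outside F' at some vertex v; right multiplication
   by the stabiliser of the star of v keeps it, so the complement is open.  If F
   acts freely, an element of U(H) :&: U(F') = U(F) fixing the star of a vertex
   is trivial, which gives discreteness. *)

Section Tree.
Variable Omega : finType.
Local Notation vertex := (vertex Omega).
Implicit Types (v x y : vertex) (a b : Omega) (w : seq Omega) (f g h k u : vertex -> vertex).

Definition root : vertex := exist _ [::] (erefl true).

Definition depth v := size (val v).

Lemma reduced_behead a w : reduced (a :: w) -> reduced w.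
Proof. exact: path_sorted. Qed.

Lemma nbw_cons a w : reduced (a :: w) -> nbw w a = a :: w.
Proof.
case: w => [|b w] //=; rewrite /reduced /= => /andP [ab _].
by rewrite eq_sym (negbTE ab).
Qed.

Lemma nbK v a : nb (nb v a) a = v.
Proof.
apply: val_inj; case: v => [[|b w] Hw] /=; first by rewrite eqxx.
by case: eqP Hw => [-> Hw | _ _] /=; [rewrite nbw_cons | rewrite eqxx].
Qed.

Lemma nb_inj v : injective (nb v).
Proof.
case: v => [[|c w] Hw] a b /(f_equal val) /=; first by case.
case: (c =P a) => [<- | _]; case: (c =P b) => [<- | _] //; last by case.
  by move/(f_equal size) => /=; lia.
by move/(f_equal size) => /=; lia.
Qed.

Lemma val_nb_cons v a : reduced (a :: val v) -> val (nb v a) = a :: val v.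
Proof. exact: nbw_cons. Qed.

Lemma depth_nb v a : depth (nb v a) <= (depth v).+1.
Proof.
by rewrite /depth /=; case: (val v) => [|b w] //=; case: eqP => //= _; rewrite ltnW.
Qed.

Lemma vertex_ind (P : vertex -> Prop) :
  P root -> (forall v a, reduced (a :: val v) -> P v -> P (nb v a)) -> forall v, P v.
Proof.
move=> P0 PS [w Hw]; elim: w Hw => [|a w IH] Hw.
  by rewrite (_ : exist _ [::] Hw = root) //; apply: val_inj.
have Hw' := reduced_behead Hw.
have -> : exist _ (a :: w) Hw = nb (exist _ w Hw') a by apply: val_inj; rewrite /= nbw_cons.
exact: PS (IH Hw').
Qed.

Lemma nb_closed_total (P : vertex -> Prop) x :
  P x -> (forall y a, P y -> P (nb y a)) -> forall y, P y.
Proof.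
move=> Px PS; suff P0 : P root by elim/vertex_ind => // v a _; apply: PS.
elim/vertex_ind: x Px => // v a _ IH Pva; apply: IH.
by rewrite -(nbK v a); apply: PS.
Qed.

Definition star v : seq vertex := v :: [seq nb v a | a <- enum Omega].

Lemma fixed_star h v : (forall x, x \in star v -> h x = x) ->
  h v = v /\ forall a, h (nb v a) = nb v a.
Proof.
move=> hS; split=> [|a]; apply: hS; first exact: mem_head.
by rewrite inE map_f ?orbT ?mem_enum.
Qed.

(** * Local permutations *)

(* [p v] plays the role of the local permutation sigma(f, v). *)
Definition local_perms (f : vertex -> vertex) (p : vertex -> {perm Omega}) :=
  forall v a, f (nb v a) = nb (f v) (p v a).

Section LocalPerms.
Variables (f : vertex -> vertex) (p : vertex -> {perm Omega}).
Hypothesis Lf : local_perms f p.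

Lemma local_perms_edge v a : p (nb v a) a = p v a.
Proof. by apply: (@nb_inj (nb (f v) (p v a))); rewrite nbK -Lf -Lf nbK. Qed.

Lemma local_perms_surj y : exists x, f x = y.
Proof.
move: y; apply: (nb_closed_total (x := f root)) => [|_ b [x <-]]; first by exists root.
by exists (nb x ((p x)^-1 b)); rewrite Lf permKV.
Qed.

End LocalPerms.

Fixpoint grow (x0 : vertex) (q : seq Omega -> vertex -> {perm Omega}) w : vertex :=
  if w is a :: w' then nb (grow x0 q w') (q w' (grow x0 q w') a) else x0.

Lemma local_perms_grow x0 q :
  (forall a w, reduced (a :: w) -> q (a :: w) (grow x0 q (a :: w)) a = q w (grow x0 q w) a) ->
  local_perms (fun v => grow x0 q (val v)) (fun v => q (val v) (grow x0 q (val v))).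
Proof.
move=> Hq [[|b w] Hw] c //=; case: eqP => [<- | _] //.
by have /= -> := Hq b w Hw; rewrite nbK.
Qed.

Lemma local_perms_bij f p : local_perms f p -> bijective f.
Proof.
move=> Lf; have [z fz] := local_perms_surj Lf root.
pose g v := grow z (fun _ y => (p y)^-1) (val v).
have Lg : local_perms g (fun v => (p (g v))^-1).
  apply: local_perms_grow => a w _ /=; set y := grow _ _ w.
  set e := (p y)^-1 a.
  by rewrite -{1}(permKV (p y) a) -/e -(local_perms_edge Lf y e) permK.
have gK : cancel g f.
  by elim/vertex_ind => // v a Hva IH; rewrite /g val_nb_cons //= Lf IH permKV.
exists g => // x; have [y <-] := local_perms_surj Lg x.
by rewrite gK.
Qed.

Lemma local_perms_aut f p : local_perms f p -> is_aut f.
Proof.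
move=> Lf; have [g fK gK] := local_perms_bij Lf.
split=> [|u v]; first by exists g.
split=> [[a ->] | [c E]]; first by exists (p u a); rewrite Lf.
by exists ((p u)^-1 c); apply: (can_inj fK); rewrite Lf permKV.
Qed.

Lemma local_perms_comp f g p q :
  local_perms f p -> local_perms g q -> local_perms (g \o f) (fun v => p v * q (f v)).
Proof. by move=> Lf Lg v a; rewrite /= Lf Lg permM. Qed.

Lemma local_perms_inv f g p :
  local_perms f p -> cancel f g -> cancel g f -> local_perms g (fun v => (p (g v))^-1).
Proof. by move=> Lf fK gK v a; rewrite -{1}(gK v) -{1}(permKV (p (g v)) a) -Lf fK. Qed.

Definition translation x : vertex -> vertex := fun v => grow x (fun _ _ => 1) (val v).

Lemma local_perms_translation x : local_perms (translation x) (fun _ => 1).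
Proof. exact: local_perms_grow. Qed.

Definition sigma f v : {perm Omega} :=
  odflt 1 [pick p : {perm Omega} | [forall a, f (nb v a) == nb (f v) (p a)]].

Lemma sigma_eq f v (p : {perm Omega}) :
  (forall a, f (nb v a) = nb (f v) (p a)) -> sigma f v = p.
Proof.
move=> Hp; rewrite /sigma; case: pickP => [q /forallP Hq | /(_ p)] /=.
  by apply/permP => a; apply: (@nb_inj (f v)); rewrite -Hp; apply/esym/eqP.
by move/negbT/forallPn => [a]; rewrite Hp eqxx.
Qed.

Lemma loc_inP (A : {set {perm Omega}}) f p v :
  local_perms f p -> loc_in A f v <-> p v \in A.
Proof.
move=> Lf; split=> [[q qA Hq] | pA]; last by exists (p v).
by rewrite -(sigma_eq (Lf v)) (sigma_eq Hq).
Qed.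

Section Subsets.
Variable A : {set {perm Omega}}.

Lemma U_local_perms f : U A f -> local_perms f (sigma f).
Proof. by case=> _ Hf v a; have [p _ Hp] := Hf v; rewrite (sigma_eq Hp). Qed.

Lemma U_sigma f v : U A f -> sigma f v \in A.
Proof. by move=> Uf; rewrite -(loc_inP _ _ (U_local_perms Uf)); case: Uf. Qed.

Lemma local_perms_U f p : local_perms f p -> (forall v, p v \in A) -> U A f.
Proof. by move=> Lf pA; split=> [|v]; [exact: local_perms_aut Lf | rewrite (loc_inP _ _ Lf)]. Qed.

Lemma local_perms_G f p : local_perms f p ->
  G A f <-> exists s : seq vertex, forall v, p v \notin A -> v \in s.
Proof.
move=> Lf; split=> [[_ [s Hs]] | [s Hs]].
  by exists s => v /negP pA; apply: Hs; rewrite (loc_inP _ _ Lf).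
split; first exact: local_perms_aut Lf.
by exists s => v vA; apply: Hs; apply/negP; rewrite -(loc_inP _ _ Lf).
Qed.

End Subsets.

Section Inclusions.
Variables A B : {set {perm Omega}}.

Lemma U_subset f : A \subset B -> U A f -> U B f.
Proof.
move=> sAB Uf; apply: (local_perms_U (U_local_perms Uf)) => v.
by rewrite (subsetP sAB) ?U_sigma.
Qed.

Lemma G_subset f : A \subset B -> G A f -> G B f.
Proof.
move=> sAB [af [s Hs]]; split=> //; exists s => v Bv; apply: Hs => -[p pA Hp].
by apply: Bv; exists p; rewrite ?(subsetP sAB).
Qed.

Lemma U_GG f : A \subset B -> U A f -> GG A B f.
Proof.
move=> sAB Uf; split; last exact: U_subset Uf.
by apply/(local_perms_G _ (U_local_perms Uf)); exists [::] => v; rewrite U_sigma.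
Qed.

End Inclusions.

Lemma GG_subset (A B A' B' : {set {perm Omega}}) f :
  A \subset A' -> B \subset B' -> GG A B f -> GG A' B' f.
Proof. by move=> sAA' sBB' [Gf Uf]; split; [apply: G_subset Gf | apply: U_subset Uf]. Qed.

Section Group.
Variable A : {group {perm Omega}}.

Lemma U_id : U A id.
Proof. by apply: (local_perms_U (p := fun _ => 1)) => // v a; rewrite perm1. Qed.

Lemma U_translation x : U A (translation x).
Proof. by apply: local_perms_U (local_perms_translation x) _ => v; apply: group1. Qed.

Lemma U_comp f g : U A f -> U A g -> U A (g \o f).
Proof.
move=> Uf Ug; apply: local_perms_U (local_perms_comp (U_local_perms Uf) (U_local_perms Ug)) _.
by move=> v; rewrite groupM ?U_sigma.
Qed.

Lemma U_inv f g : U A f -> cancel f g -> cancel g f -> U A g.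
Proof.
move=> Uf fK gK; apply: local_perms_U (local_perms_inv (U_local_perms Uf) fK gK) _.
by move=> v; rewrite groupV U_sigma.
Qed.

Lemma U_bij f : U A f -> bijective f.
Proof. by move/U_local_perms/local_perms_bij. Qed.

End Group.

Section GroupPair.
Variables A B : {group {perm Omega}}.

Lemma GG_comp f g : GG A B f -> GG A B g -> GG A B (g \o f).
Proof.
move=> [Gf Uf] [Gg Ug]; split; last exact: U_comp.
have Lf := U_local_perms Uf; have Lg := U_local_perms Ug.
have [fi fK _] := local_perms_bij Lf.
have [sf Hsf] := (local_perms_G _ Lf).1 Gf; have [sg Hsg] := (local_perms_G _ Lg).1 Gg.
apply/(local_perms_G _ (local_perms_comp Lf Lg)); exists (sf ++ map fi sg) => v.
rewrite mem_cat; have [fA | /Hsf -> //] := boolP (sigma f v \in A).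
have [gA | /Hsg gs] := boolP (sigma g (f v) \in A); first by rewrite groupM.
by rewrite -(fK v) map_f ?orbT.
Qed.

Lemma GG_inv f g : GG A B f -> cancel f g -> cancel g f -> GG A B g.
Proof.
move=> [Gf Uf] fK gK; split; last exact: U_inv Uf fK gK.
have Lf := U_local_perms Uf; have [sf Hsf] := (local_perms_G _ Lf).1 Gf.
apply/(local_perms_G _ (local_perms_inv Lf fK gK)); exists (map f sf) => v.
by rewrite groupV -{2}(gK v) => /Hsf/(map_f f).
Qed.

Lemma GG_cancel_l f g : GG A B g -> GG A B (g \o f) -> GG A B f.
Proof.
move=> Gg Ggf; have [gi gK giK] := U_bij Gg.2.
have -> : f = gi \o (g \o f) by apply: functional_extensionality => x /=; rewrite gK.
exact: GG_comp Ggf (GG_inv Gg gK giK).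
Qed.

End GroupPair.

Lemma sigma_comp (A B : {set {perm Omega}}) f g v : U A f -> U B g ->
  sigma (g \o f) v = sigma f v * sigma g (f v).
Proof.
move=> Uf Ug; apply: sigma_eq => a.
exact: local_perms_comp (U_local_perms Uf) (U_local_perms Ug) v a.
Qed.

Lemma sigma_fixed_star h v : (forall x, x \in star v -> h x = x) -> sigma h v = 1.
Proof. by move=> /fixed_star [hv hnb]; apply: sigma_eq => a; rewrite hnb hv perm1. Qed.

Lemma U_free_fixed_star (A : {set {perm Omega}}) u x : acts_freely A -> U A u ->
  (forall y, y \in star x -> u y = y) -> u =1 id.
Proof.
move=> freeA Uu fixu; have Lu := U_local_perms Uu.
suff Pu y : u y = y /\ sigma u y = 1 by move=> y; case: (Pu y).
move: y; apply: (nb_closed_total (x := x)) => [|y a [uy sy]].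
  by split; [exact: (fixed_star fixu).1 | exact: sigma_fixed_star].
split; first by rewrite Lu uy sy perm1.
by apply: (freeA _ (U_sigma _ Uu) a); rewrite (local_perms_edge Lu) sy perm1.
Qed.

(** * Compactness of the root stabiliser *)

Fixpoint ball n : seq (seq Omega) :=
  if n is m.+1 then [::] :: [seq a :: w | a <- enum Omega, w <- ball m] else [:: [::]].

Lemma mem_ball n w : (w \in ball n) = (size w <= n).
Proof.
elim: n w => [|n IH] [|a w] //=; rewrite in_cons /=.
apply/allpairsP/idP => [[[b w'] [_ w'n [_ ->]]] | wn]; first by rewrite ltnS -IH.
by exists (a, w); rewrite mem_enum IH -ltnS.
Qed.

Fixpoint tuples (T : Type) (L : seq T) m : seq (seq T) :=
  if m is m'.+1 then [seq t :: s | t <- L, s <- tuples L m'] else [:: [::]].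

Lemma mem_tuples (T : eqType) (L : seq T) s : all (mem L) s -> s \in tuples L (size s).
Proof. by elim: s => [|t s IH] //= /andP [tL /IH]; apply: allpairs_f. Qed.

Lemma depth_fixed_root f p : local_perms f p -> f root = root ->
  forall v, depth (f v) <= depth v.
Proof.
move=> Lf f0; elim/vertex_ind => [|v a Hva IH]; first by rewrite f0.
by rewrite Lf {2}/depth val_nb_cons //; apply: leq_trans (depth_nb _ _) _.
Qed.

Definition root_stab (A : {set {perm Omega}}) f := U A f /\ f root = root.

Definition agree n f g := forall v, depth v <= n -> f v = g v.

Definition pattern n f := [seq val (f (insubd root w)) | w <- ball n].

Lemma pattern_agree n f g : pattern n f = pattern n g -> agree n f g.
Proof.
move=> /eq_in_map E v vn; apply: val_inj.
by have := E (val v); rewrite mem_ball /= valKd; apply.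
Qed.

Lemma mem_pattern (A : {set {perm Omega}}) n f :
  root_stab A f -> pattern n f \in tuples (ball n) (size (ball n)).
Proof.
case=> Uf f0; rewrite -(size_map (fun w => val (f (insubd root w)))).
apply/mem_tuples/allP => _ /mapP [w wn ->]; rewrite inE mem_ball.
apply: leq_trans (depth_fixed_root (U_local_perms Uf) f0 _) _.
by rewrite /depth val_insubd; case: ifP => // _; rewrite -mem_ball.
Qed.

Lemma root_stab_limit (A : {set {perm Omega}}) (kn : nat -> vertex -> vertex) :
  (forall n, root_stab A (kn n)) -> (forall n, agree n (kn n.+1) (kn n)) ->
  exists2 k, root_stab A k & forall n, agree n k (kn n).
Proof.
move=> knA kn_agree.
have agree_later d m : agree m (kn (m + d)) (kn m).
  elim: d => [|d IH] v vm; first by rewrite addn0.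
  by rewrite addnS kn_agree ?IH // (leq_trans vm (leq_addr _ _)).
pose k v := kn (depth v) v.
have kE n v : depth v <= n -> k v = kn n v.
  by move=> vn; rewrite /k -(subnKC vn) agree_later.
have Lk : local_perms k (fun v => sigma (kn (depth v).+1) v).
  move=> v a; have [Ukn _] := knA (depth v).+1.
  by rewrite (kE (depth v).+1) ?depth_nb // (kE (depth v).+1 v) // (U_local_perms Ukn).
exists k => [|n v vn]; last exact: kE.
split; last by rewrite /k; case: (knA 0).
by apply: local_perms_U Lk _ => v; case: (knA (depth v).+1) => /U_sigma.
Qed.

Section RootStabCompact.
Variables (A : {group {perm Omega}}) (I : Type) (O : I -> (vertex -> vertex) -> Prop).

Definition covered (C : (vertex -> vertex) -> Prop) :=
  exists s : list I, forall k, C k -> exists i, List.In i s /\ O i k.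

Lemma covered_sub (C1 C2 : (vertex -> vertex) -> Prop) :
  (forall k, C1 k -> C2 k) -> covered C2 -> covered C1.
Proof. by move=> sC [s Hs]; exists s => k /sC /Hs. Qed.

Lemma covered_fibres (T : eqType) (L : seq T) (pt : (vertex -> vertex) -> T) C :
  (forall t, t \in L -> covered (fun k => C k /\ pt k = t)) ->
  covered (fun k => C k /\ pt k \in L).
Proof.
elim: L => [|t L IH] covL; first by exists nil => k [].
have [s1 Hs1] := covL t (mem_head _ _).
have [s2 Hs2] : covered (fun k => C k /\ pt k \in L).
  by apply: IH => t' t'L; apply: covL; rewrite in_cons t'L orbT.
exists (s1 ++ s2) => k [Ck]; rewrite in_cons => /predU1P [kt | kL].
  by have [i [si Oik]] := Hs1 k (conj Ck kt); exists i; rewrite List.in_app_iff; auto.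
by have [i [si Oik]] := Hs2 k (conj Ck kL); exists i; rewrite List.in_app_iff; auto.
Qed.

Definition nbhd n k0 k := root_stab A k /\ agree n k k0.

(* Koenig step: only finitely many patterns occur on the ball of radius [n.+1]. *)
Lemma refine_uncovered n k0 : ~ covered (nbhd n k0) ->
  exists k1, [/\ root_stab A k1, agree n k1 k0 & ~ covered (nbhd n.+1 k1)].
Proof.
move=> unc; apply: NNPP => all_cov; apply: unc.
apply: (covered_sub (C2 := fun k => nbhd n k0 k /\
  pattern n.+1 k \in tuples (ball n.+1) (size (ball n.+1)))).
  by move=> k [Ak ag]; split; last exact: mem_pattern Ak.
apply: covered_fibres => t _.
have [[k1 [[Ak1 ag1] pk1]] | none] :=
  classic (exists k1, nbhd n k0 k1 /\ pattern n.+1 k1 = t); last first.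
  by exists nil => k [Ck pk]; case: none; exists k.
have: covered (nbhd n.+1 k1) by apply: NNPP => unc1; apply: all_cov; exists k1.
apply: covered_sub => k [[Ak _] pk]; split=> //.
by apply: pattern_agree; rewrite pk.
Qed.

Hypothesis O_open : forall i k, O i k -> exists S : seq vertex, forall h, U A h ->
  (forall v, v \in S -> h v = v) -> O i (k \o h).

Lemma root_stab_covered :
  (forall k, root_stab A k -> exists i, O i k) -> covered (root_stab A).
Proof.
move=> cover; apply: NNPP => unc.
have step n k : exists k1, ~ covered (nbhd n k) ->
    [/\ root_stab A k1, agree n k1 k & ~ covered (nbhd n.+1 k1)].
  have [cov | /refine_uncovered [k1 Hk1]] := classic (covered (nbhd n k)); last by exists k1.
  by exists k.
pose next n k := sval (constructive_indefinite_description _ (step n k)).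
have nextP n k := svalP (constructive_indefinite_description _ (step n k)).
pose kn n := iteri n next id.
have kn_bad n : root_stab A (kn n) /\ ~ covered (nbhd n (kn n)).
  elim: n => [|n [_ unc_n]]; last by case: (nextP n (kn n) unc_n).
  split; first by split; [exact: U_id | ].
  apply: contra_not unc; apply: covered_sub => k [Uk k0]; split=> // v.
  by rewrite leqn0 => /nilP v0; rewrite (_ : v = root) ?k0 //; exact: val_inj.
have [kinf Akinf kinf_agree] : exists2 k, root_stab A k & forall n, agree n k (kn n).
  apply: root_stab_limit => n; first by case: (kn_bad n).
  by case: (nextP n (kn n) (kn_bad n).2).
have [i Oi] := cover _ Akinf; have [S HS] := O_open Oi.
pose N := \max_(v <- S) depth v.
apply: (kn_bad N).2; exists [:: i] => k [Ak agk]; exists i; split; first by left.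
have [ki kK kiK] := U_bij Akinf.1.
have -> : k = kinf \o (ki \o k) by apply: functional_extensionality => x /=; rewrite kiK.
apply: HS; first exact: U_comp Ak.1 (U_inv Akinf.1 kK kiK).
move=> v vS /=; have vN : depth v <= N by exact: leq_bigmax_seq.
by rewrite agk // -kinf_agree // kK.
Qed.

End RootStabCompact.

(** * The decomposition G(H,H') = U(H)_root G(F,F') *)

Section Decomposition.
Variables F F' H H' : {group {perm Omega}}.
Hypotheses (sFF' : F \subset F') (sF'hF : F' \subset hat F).
Hypotheses (sFH : F \subset H) (sHH' : H \subset H') (sF'H' : F' \subset H').
Hypotheses (HF'E : H :&: F' = F :> {set _}) (H'E : H' = (H * F')%g :> {set _}).

Lemma mem_F p : p \in H -> p \in F' -> p \in F.
Proof. by move=> pH pF'; rewrite -HF'E inE pH. Qed.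

Lemma U_HF' u : U H u -> U F' u -> U F u.
Proof.
move=> UHu UF'u; apply: local_perms_U (U_local_perms UHu) _ => v.
by apply: mem_F; apply: U_sigma.
Qed.

Lemma adapt_perm0 t : t \in H' -> exists r, (r \in F') && (r^-1 * t \in H).
Proof.
rewrite -groupV H'E => /mulsgP [h q hH qF' tE]; exists q^-1.
by rewrite groupV qF' invgK -[t]invgK tE invMg mulgA mulgV mul1g groupV.
Qed.

(* [F' <= hat F] lets us correct [r] by an element of [F] to prescribe its value at [a]. *)
Lemma adapt_perm t q a : t \in H' -> q \in F' ->
  exists r, [&& r \in F', r^-1 * t \in H & r a == q a].
Proof.
move=> /adapt_perm0 [r0 /andP [r0F' r0H]] qF'.
have orbF p : p \in F' -> exists2 f, f \in F & f a = p a.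
  by move=> /(subsetP sF'hF); rewrite inE => /forallP /(_ a) /orbitP.
have [f1 f1F E1] := orbF _ r0F'; have [f2 f2F E2] := orbF _ qF'.
have sFF'f := subsetP sFF'; have sFHf := subsetP sFH.
exists (r0 * (f1^-1 * f2)); apply/and3P; split.
- by rewrite groupM // groupM ?groupV ?sFF'f.
- by rewrite invMg -mulgA groupM // groupV groupM ?groupV ?sFHf.
- by rewrite !permM -E1 -E2 permK.
Qed.

Section Adapted.
Variable s : seq Omega -> {perm Omega}.
Hypothesis sH' : forall w, s w \in H'.

Fixpoint adapted w : {perm Omega} :=
  if w is a :: w' then
    odflt 1 [pick r | [&& r \in F', r^-1 * s w \in H & r a == adapted w' a]]
  else odflt 1 [pick r | (r \in F') && (r^-1 * s [::] \in H)].

Lemma adapted_in w : (adapted w \in F') && ((adapted w)^-1 * s w \in H).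
Proof.
elim: w => [|a w IH] /=; case: pickP => [r | none].
- by [].
- by have [r Hr] := adapt_perm0 (sH' [::]); rewrite none in Hr.
- by case/and3P => -> ->.
have [r Hr] := adapt_perm a (sH' (a :: w)) (proj1 (andP IH)).
by rewrite none in Hr.
Qed.

Lemma adapted_cons a w : adapted (a :: w) a = adapted w a.
Proof.
rewrite /=; case: pickP => [r /and3P [_ _ /eqP] // | none].
have [r Hr] := adapt_perm a (sH' (a :: w)) (proj1 (andP (adapted_in w))).
by rewrite none in Hr.
Qed.

End Adapted.

Lemma GG_correction g : GG H H' g -> exists gam p,
  [/\ GG F F' gam, local_perms gam p & forall v, (p v)^-1 * sigma g v \in H].
Proof.
move=> [Gg Ug]; pose s w := sigma g (insubd root w).
have sH' w : s w \in H' by exact: U_sigma.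
have sE v : s (val v) = sigma g v by rewrite /s valKd.
pose p v := adapted s (val v).
pose gam v := grow root (fun w _ => adapted s w) (val v).
have Lgam : local_perms gam p by apply: local_perms_grow => a w _; exact: adapted_cons.
have pF' v : p v \in F' by case/andP: (adapted_in sH' (val v)).
have pH v : (p v)^-1 * sigma g v \in H by rewrite -sE; case/andP: (adapted_in sH' (val v)).
exists gam, p; split=> //; split; last exact: local_perms_U Lgam pF'.
have [sg Hsg] := (local_perms_G _ (U_local_perms Ug)).1 Gg.
apply/(local_perms_G _ Lgam); exists sg => v pF; apply: Hsg; apply: contra pF => gH.
by apply: mem_F (pF' v); rewrite -groupV -(mulgK (sigma g v) (p v)^-1) groupM ?groupV.
Qed.

Lemma GG_factor g : GG H H' g ->
  exists k gam, [/\ U H k, k root = root, GG F F' gam & g = k \o gam].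
Proof.
move=> Gg; have [gam [p [Ggam Lgam pH]]] := GG_correction Gg.
have [gami gamK gamiK] := local_perms_bij Lgam.
have Uu : U H (g \o gami).
  apply: local_perms_U (local_perms_comp (local_perms_inv Lgam gamK gamiK)
                                         (U_local_perms Gg.2)) _.
  by move=> v; apply: pH.
have [ui uK uiK] := U_bij Uu.
(* A translation has trivial local permutations and moves the root where needed. *)
have [ti tK tiK] := U_bij (U_translation F (ui root)).
exists ((g \o gami) \o translation (ui root)), (ti \o gam); split.
- exact: U_comp (U_translation H _) Uu.
- exact: uiK.
- exact: GG_comp Ggam (U_GG sFF' (U_inv (U_translation F _) tK tiK)).
- by apply: functional_extensionality => x /=; rewrite tiK gamK.
Qed.

Lemma GG_factor_r g : GG H H' g ->
  exists k gam, [/\ U H k, GG F F' gam & g = gam \o k].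
Proof.
move=> Gg; have [gi gK giK] := U_bij Gg.2.
have [k [gam [Uk _ Ggam giE]]] := GG_factor (GG_inv Gg gK giK).
have [ki kK kiK] := U_bij Uk; have [gami gamK gamiK] := U_bij Ggam.2.
exists ki, gami; split; [exact: U_inv Uk kK kiK | exact: GG_inv Ggam gamK gamiK |].
by apply: functional_extensionality => x /=; rewrite -{2}(gK x) giE /= kK gamK.
Qed.

Lemma U_notin_GG k : U H k -> ~ GG F F' k -> exists v, sigma k v \notin F'.
Proof.
move=> Uk NGk; apply: NNPP => allF'; apply/NGk/(U_GG sFF')/U_HF' => //.
apply: local_perms_U (U_local_perms Uk) _ => v.
by apply: contraT => kv; case: allF'; exists v.
Qed.

Lemma GG_closed : is_closed H H' (GG F F').
Proof.
move=> g [Gg NGg]; split=> //.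
have [k [gam [Uk Ggam gE]]] := GG_factor_r Gg.
have [v kv] : exists v, sigma k v \notin F'.
  by apply: U_notin_GG => // Gk; apply: NGg; rewrite gE; apply: GG_comp Gk Ggam.
(* [h] fixing [star v] leaves the local permutation at [v] unchanged. *)
exists (star v) => h Uh fixh; split=> [|Ggh]; first exact: GG_comp (U_GG sHH' Uh) Gg.
have [_ Ukh] : GG F F' (k \o h) by apply: GG_cancel_l Ggam _; rewrite gE in Ggh.
move: kv; rewrite -(mul1g (sigma k v)) -(sigma_fixed_star fixh).
by rewrite -{2}(fixed_star fixh).1 -(sigma_comp v Uh Uk) U_sigma.
Qed.

Lemma GG_cocompact : cocompact H H' (GG F F').
Proof.
move=> I O Oopen Osat Ocover.
have [s Hs] := root_stab_covered (fun i k Ok => (Oopen i k Ok).2)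
  (fun k Hk => Ocover k (U_GG sHH' Hk.1)).
exists s => g Gg; have [k [gam [Uk k0 Ggam ->]]] := GG_factor Gg.
by have [i [si Oik]] := Hs k (conj Uk k0); exists i; split=> //; apply: Osat.
Qed.

Lemma GG_discrete : acts_freely F -> discrete H H' (GG F F').
Proof.
move=> freeF gam Ggam.
pose O g := GG H H' g /\
  exists u, [/\ U H u, forall x, x \in star root -> u x = x & g = gam \o u].
exists O; split; [|split].
- move=> g [Gg [u [Uu fixu gE]]]; split=> //; exists (star root) => h Uh fixh.
  split; first exact: GG_comp (U_GG sHH' Uh) Gg.
  exists (u \o h); split; [exact: U_comp | | by rewrite gE].
  by move=> x xS /=; rewrite fixh ?fixu.
- split; first exact: GG_subset sFH sF'H' Ggam.
  by exists id; split=> //; exact: U_id.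
- move=> _ [_ [u [Uu fixu ->]]] Ggu x /=.
  have [_ UF'u] := GG_cancel_l Ggam Ggu.
  by rewrite (U_free_fixed_star freeF (U_HF' Uu UF'u) fixu).
Qed.

End Decomposition.

End Tree.

Theorem mainTheorem10 (Omega : finType) (F F' H H' : {group {perm Omega}}) :
  2 < #|Omega| ->
  F \subset F' -> F' \subset hat F ->
  H \subset H' -> H' \subset hat H ->
  F \subset H -> F' \subset H' ->
  H :&: F' = F :> {set {perm Omega}} ->
  H' = (H * F')%g :> {set {perm Omega}} ->
  ((forall g, GG F F' g -> GG H H' g) /\
   is_closed H H' (GG F F') /\ cocompact H H' (GG F F')) /\
  (acts_freely F -> cocompact_lattice H H' (GG F F')).
Proof.
move=> _ sFF' sF'hF sHH' _ sFH sF'H' HF'E H'E.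
have cocompact := GG_cocompact sFF' sF'hF sFH sHH' HF'E H'E.
split; first split.
- by move=> g; apply: GG_subset.
- split=> //; exact: GG_closed sFF' sF'hF sFH sHH' HF'E H'E.
- by move=> freeF; split=> //; exact: GG_discrete.
Qed.
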